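(* Let $n\in\mathbb N\cup\{\omega\}$ and let $F\colon C\to D$ be a Conduché $n$-prefunctor between $n$-precategories. If $F(u)=1_v$ for some $k<n$, $u\in C_{k+1}$ and $v\in D_k$, then there exists a unique $u'\in C_k$ such that $F(u')=v$ and $u=1_{u'}$.
   Context: An $n$-precategory is an $n$-globular set $C$ (sets $C_k$, $k\le n$, with $s_i,t_i\colon C_{i+1}\to C_i$ satisfying $s_is_{i+1}=s_it_{i+1}$, $t_is_{i+1}=t_it_{i+1}$) with identities $u\mapsto1_u\colon C_k\to C_{k+1}$ and compositions $u\ast_iv\in C_{\max(k,l)}$ for $u\in C_k$, $v\in C_l$, $k,l\ge1$, $i=\min(k,l)-1$, $t_i(u)=s_i(v)$, satisfying the axioms of strict $n$-categories for sources/targets, units (e.g. $1_{s(w)}\ast_kw=w=w\ast_k1_{t(w)}$ for $w\in C_{k+1}$), associativity and distributivity of lower- over higher-dimensional composition, but not necessarily the interchange law; prefunctors preserve all this structure. An $n$-prefunctor $F\colon C\to D$ is Conduché if for all $k_1,k_2\ge1$ with $i=\min(k_1,k_2)-1$, $k=\max(k_1,k_2)$, every $u\in C_k$ and $i$-composable $v_1\in D_{k_1}$, $v_2\in D_{k_2}$ with $F(u)=v_1\ast_iv_2$, there exist unique $i$-composable $u_1\in C_{k_1}$, $u_2\in C_{k_2}$ with $F(u_1)=v_1$, $F(u_2)=v_2$ and $u_1\ast_iu_2=u$. *)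

From mathcomp Require Import all_boot.
Set Implicit Arguments. Unset Strict Implicit. Unset Printing Implicit Defensive.

Inductive nomega := Fin of nat | Omega.

Definition ltw (k : nat) (n : nomega) : Prop :=
  match n with Fin m => (k < m)%N | Omega => True end.
Definition lew (k : nat) (n : nomega) : Prop :=
  match n with Fin m => (k <= m)%N | Omega => True end.

(* Graded ("single-sorted") presentation of an n-globular set with
   identities and compositions: C_k = [x | dim x = k].
   src/tgt are s_{k-1}, t_{k-1} : C_k -> C_{k-1} (junk on 0-cells),
   idc x = 1_x : C_k -> C_{k+1} (junk on n-cells),
   comp i u v = u *_i v (junk unless u,v are i-composable). *)
Record gdata := GData {
  cell : Type;
  dim : cell -> nat;
  src : cell -> cell;
  tgt : cell -> cell;
  idc : cell -> cell;
  comp : nat -> cell -> cell -> cell }.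

Section GDefs.
Variable G : gdata.
Implicit Types x u v w : cell G.

Definition isrc (i : nat) x : cell G := iter (dim x - i) (@src G) x.
Definition itgt (i : nat) x : cell G := iter (dim x - i) (@tgt G) x.

Definition composable (i : nat) u v : Prop :=
  [/\ (1 <= dim u)%N, (1 <= dim v)%N, i = (minn (dim u) (dim v)).-1
    & itgt i u = isrc i v].
End GDefs.

Record is_precat (n : nomega) (G : gdata) : Prop := {
  pc_dim_le : forall x : cell G, lew (dim x) n;
  pc_dim_src : forall x : cell G, (1 <= dim x)%N -> dim (src x) = (dim x).-1;
  pc_dim_tgt : forall x : cell G, (1 <= dim x)%N -> dim (tgt x) = (dim x).-1;
  pc_glob_s : forall x : cell G, (2 <= dim x)%N -> src (src x) = src (tgt x);
  pc_glob_t : forall x : cell G, (2 <= dim x)%N -> tgt (src x) = tgt (tgt x);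
  pc_dim_id : forall x : cell G, ltw (dim x) n -> dim (idc x) = (dim x).+1;
  pc_src_id : forall x : cell G, ltw (dim x) n -> src (idc x) = x;
  pc_tgt_id : forall x : cell G, ltw (dim x) n -> tgt (idc x) = x;
  pc_dim_comp : forall i (u v : cell G), composable i u v ->
    dim (comp i u v) = maxn (dim u) (dim v);
  pc_isrc_comp : forall i (u v : cell G), composable i u v ->
    isrc i (comp i u v) = isrc i u;
  pc_itgt_comp : forall i (u v : cell G), composable i u v ->
    itgt i (comp i u v) = itgt i v;
  pc_src_comp_l : forall i (u v : cell G), composable i u v -> (dim u < dim v)%N ->
    src (comp i u v) = comp i u (src v);
  pc_tgt_comp_l : forall i (u v : cell G), composable i u v -> (dim u < dim v)%N ->
    tgt (comp i u v) = comp i u (tgt v);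
  pc_src_comp_r : forall i (u v : cell G), composable i u v -> (dim v < dim u)%N ->
    src (comp i u v) = comp i (src u) v;
  pc_tgt_comp_r : forall i (u v : cell G), composable i u v -> (dim v < dim u)%N ->
    tgt (comp i u v) = comp i (tgt u) v;
  pc_unit_l : forall i (w : cell G), (i < dim w)%N ->
    comp i (idc (isrc i w)) w = w;
  pc_unit_r : forall i (w : cell G), (i < dim w)%N ->
    comp i w (idc (itgt i w)) = w;
  pc_id_comp_l : forall i (u v : cell G), composable i u v -> (dim u < dim v)%N ->
    ltw (dim v) n -> idc (comp i u v) = comp i u (idc v);
  pc_id_comp_r : forall i (u v : cell G), composable i u v -> (dim v < dim u)%N ->
    ltw (dim u) n -> idc (comp i u v) = comp i (idc u) v;
  pc_assoc : forall i (u v w : cell G),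
    composable i u v -> composable i v w ->
    composable i (comp i u v) w -> composable i u (comp i v w) ->
    comp i (comp i u v) w = comp i u (comp i v w);
  pc_distr_l : forall i j (u v w : cell G), (i < j)%N ->
    composable j v w -> composable i u (comp j v w) ->
    composable i u v -> composable i u w ->
    composable j (comp i u v) (comp i u w) ->
    comp i u (comp j v w) = comp j (comp i u v) (comp i u w);
  pc_distr_r : forall i j (u v w : cell G), (i < j)%N ->
    composable j v w -> composable i (comp j v w) u ->
    composable i v u -> composable i w u ->
    composable j (comp i v u) (comp i w u) ->
    comp i (comp j v w) u = comp j (comp i v u) (comp i w u)
}.

Record precat (n : nomega) := Precat {
  pc_data :> gdata;
  pc_axioms : is_precat n pc_data }.

Record prefunctor (n : nomega) (C D : precat n) := Prefunctor {
  fmap :> cell C -> cell D;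
  pf_dim : forall x, dim (fmap x) = dim x;
  pf_src : forall x, (1 <= dim x)%N -> fmap (src x) = src (fmap x);
  pf_tgt : forall x, (1 <= dim x)%N -> fmap (tgt x) = tgt (fmap x);
  pf_id : forall x, ltw (dim x) n -> fmap (idc x) = idc (fmap x);
  pf_comp : forall i u v, composable i u v ->
    fmap (comp i u v) = comp i (fmap u) (fmap v) }.

Definition conduche (n : nomega) (C D : precat n) (F : prefunctor C D) : Prop :=
  forall i (u : cell C) (v1 v2 : cell D),
    composable i v1 v2 -> F u = comp i v1 v2 ->
    exists u1 u2 : cell C,
      [/\ composable i u1 u2, F u1 = v1, F u2 = v2 & comp i u1 u2 = u] /\
      forall w1 w2 : cell C,
        composable i w1 w2 -> F w1 = v1 -> F w2 = v2 -> comp i w1 w2 = u ->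
        w1 = u1 /\ w2 = u2.

(* Since F u = 1_v = 1_v *_k 1_v, the two unit factorisations
   u = 1_{s u} *_k u and u = u *_k 1_{t u} both lie over (1_v, 1_v); the
   uniqueness half of the Conduché condition identifies their first factors,
   so u = 1_{s u}, and s u is the only cell whose identity is u. *)

From Pilot Require Import Defs.
From mathcomp Require Import all_boot.

Set Implicit Arguments.
Unset Strict Implicit.
Unset Printing Implicit Defensive.

Lemma ltw_of_lew_succ (k : nat) (n : nomega) : lew k.+1 n -> ltw k n.
Proof. by case: n. Qed.

Lemma isrc_pred_dim (G : gdata) (k : nat) (x : cell G) :
  dim x = k.+1 -> isrc k x = src x.
Proof. by move=> dx; rewrite /isrc dx subSnn. Qed.

Lemma itgt_pred_dim (G : gdata) (k : nat) (x : cell G) :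
  dim x = k.+1 -> itgt k x = tgt x.
Proof. by move=> dx; rewrite /itgt dx subSnn. Qed.

Lemma composable_top (G : gdata) (k : nat) (u v : cell G) :
  dim u = k.+1 -> dim v = k.+1 -> tgt u = src v -> composable k u v.
Proof.
move=> du dv tu_sv; split; rewrite ?du ?dv ?minnn //.
by rewrite itgt_pred_dim // isrc_pred_dim.
Qed.

Section PrecatUnits.

Variables (n : nomega) (G : gdata).
Hypothesis HG : is_precat n G.
Implicit Types (k : nat) (x w : cell G).

Lemma ltw_pred_dim k x : dim x = k.+1 -> ltw k n.
Proof.
by move=> dx; apply: ltw_of_lew_succ; rewrite -dx; apply: (pc_dim_le HG).
Qed.

Lemma dim_src_top k w : dim w = k.+1 -> dim (src w) = k.
Proof. by move=> dw; rewrite (pc_dim_src HG) dw. Qed.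

Lemma dim_tgt_top k w : dim w = k.+1 -> dim (tgt w) = k.
Proof. by move=> dw; rewrite (pc_dim_tgt HG) dw. Qed.

Lemma dim_idc k x : ltw k n -> dim x = k -> dim (idc x) = k.+1.
Proof. by move=> kn dx; rewrite (pc_dim_id HG) dx // dx. Qed.

Lemma src_idc k x : ltw k n -> dim x = k -> src (idc x) = x.
Proof. by move=> kn dx; apply: (pc_src_id HG); rewrite dx. Qed.

Lemma tgt_idc k x : ltw k n -> dim x = k -> tgt (idc x) = x.
Proof. by move=> kn dx; apply: (pc_tgt_id HG); rewrite dx. Qed.

Lemma composable_idc_src k w : dim w = k.+1 -> composable k (idc (src w)) w.
Proof.
move=> dw; have kn := ltw_pred_dim dw; have dsw := dim_src_top dw.
by apply: composable_top; rewrite ?(dim_idc kn dsw) ?(tgt_idc kn dsw).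
Qed.

Lemma composable_idc_tgt k w : dim w = k.+1 -> composable k w (idc (tgt w)).
Proof.
move=> dw; have kn := ltw_pred_dim dw; have dtw := dim_tgt_top dw.
by apply: composable_top; rewrite ?(dim_idc kn dtw) ?(src_idc kn dtw).
Qed.

Lemma comp_idc_src k w : dim w = k.+1 -> Defs.comp k (idc (src w)) w = w.
Proof.
by move=> dw; rewrite -{1}(isrc_pred_dim dw) (pc_unit_l HG) // dw.
Qed.

Lemma comp_idc_tgt k w : dim w = k.+1 -> Defs.comp k w (idc (tgt w)) = w.
Proof.
by move=> dw; rewrite -{1}(itgt_pred_dim dw) (pc_unit_r HG) // dw.
Qed.

Lemma composable_idc_idc k x : ltw k n -> dim x = k ->
  composable k (idc x) (idc x).
Proof.
move=> kn dx; have := composable_idc_src (dim_idc kn dx).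
by rewrite (src_idc kn dx).
Qed.

Lemma comp_idc_idc k x : ltw k n -> dim x = k ->
  Defs.comp k (idc x) (idc x) = idc x.
Proof.
move=> kn dx; have := comp_idc_src (dim_idc kn dx).
by rewrite (src_idc kn dx).
Qed.

End PrecatUnits.

Section ConducheIdentities.

Variables (n : nomega) (C D : precat n) (F : prefunctor C D).
Hypothesis conducheF : conduche F.

Lemma conduche_factor_uniq i (u u1 u2 w1 w2 : cell C) (v1 v2 : cell D) :
  composable i v1 v2 -> F u = Defs.comp i v1 v2 ->
  composable i u1 u2 -> F u1 = v1 -> F u2 = v2 -> Defs.comp i u1 u2 = u ->
  composable i w1 w2 -> F w1 = v1 -> F w2 = v2 -> Defs.comp i w1 w2 = u ->
  u1 = w1 /\ u2 = w2.
Proof.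
move=> v12 Fu u12 Fu1 Fu2 u1u2 w12 Fw1 Fw2 w1w2.
have [l1 [l2 [_ lift_uniq]]] := conducheF v12 Fu.
have [-> ->] := lift_uniq _ _ u12 Fu1 Fu2 u1u2.
by have [-> ->] := lift_uniq _ _ w12 Fw1 Fw2 w1w2.
Qed.

Lemma prefunctor_src_of_idc (u : cell C) (v : cell D) k :
  dim u = k.+1 -> dim v = k -> F u = idc v -> F (idc (src u)) = idc v.
Proof.
move=> du dv Fu; have kn := ltw_pred_dim (pc_axioms C) du.
have du_pos : (1 <= dim u)%N by rewrite du.
rewrite pf_id; last by rewrite (dim_src_top (pc_axioms C) du).
by rewrite pf_src // Fu (src_idc (pc_axioms D) kn dv).
Qed.

Lemma prefunctor_tgt_of_idc (u : cell C) (v : cell D) k :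
  dim u = k.+1 -> dim v = k -> F u = idc v -> F (idc (tgt u)) = idc v.
Proof.
move=> du dv Fu; have kn := ltw_pred_dim (pc_axioms C) du.
have du_pos : (1 <= dim u)%N by rewrite du.
rewrite pf_id; last by rewrite (dim_tgt_top (pc_axioms C) du).
by rewrite pf_tgt // Fu (tgt_idc (pc_axioms D) kn dv).
Qed.

Lemma conduche_idc_src (u : cell C) (v : cell D) k :
  dim u = k.+1 -> dim v = k -> F u = idc v -> u = idc (src u).
Proof.
move=> du dv Fu; have AC := pc_axioms C; have AD := pc_axioms D.
have kn := ltw_pred_dim AC du.
have Fu_split : F u = Defs.comp k (idc v) (idc v).
  by rewrite (comp_idc_idc AD kn dv).
exact: (conduche_factor_uniq (composable_idc_idc AD kn dv) Fu_split
  (composable_idc_tgt AC du) Fu (prefunctor_tgt_of_idc du dv Fu)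
  (comp_idc_tgt AC du)
  (composable_idc_src AC du) (prefunctor_src_of_idc du dv Fu)
  Fu (comp_idc_src AC du)).1.
Qed.

End ConducheIdentities.

Theorem proposition2p6 (n : nomega) (C D : precat n) (F : prefunctor C D) :
  conduche F ->
  forall (k : nat) (u : cell C) (v : cell D),
    ltw k n -> dim u = k.+1 -> dim v = k -> F u = idc v ->
    exists u' : cell C, (dim u' = k /\ F u' = v /\ u = idc u') /\
      forall u'' : cell C, dim u'' = k -> F u'' = v -> u = idc u'' -> u'' = u'.
Proof.
move=> conducheF k u v kn du dv Fu.
have AC := pc_axioms C; have AD := pc_axioms D.
exists (src u); split.
  split; first exact: (dim_src_top AC du).
  split; last exact: (conduche_idc_src conducheF du dv Fu).
  by rewrite pf_src ?du // Fu (src_idc AD kn dv).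
by move=> u'' du'' _ ->; rewrite (src_idc AC kn du'').
Qed.
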